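(* With probability $1$, the graphs $G(X^{(n)})$ and $G^\prime(X^{(n)})$ have the same connected components.
   Context: Fix an integer $d\ge2$ and $n\ge1$. $\mathbb{T}_n$ is the torus obtained from $[-n/2,n/2]^d$ by identifying opposite faces, with toroidal distance ${\rm d}_{\mathbb{T}_n}$ and $B^{\mathbb{T}_n}_r(\xi)=\{\eta\in\mathbb{T}_n:{\rm d}_{\mathbb{T}_n}(\xi,\eta)\le r\}$. $R$ is a nonnegative random variable with absolutely continuous distribution such that $\lim_{h\to\infty}h^s\mathbb{P}(R>h)=\beta$ for some $\beta,s\in(0,\infty)$. $X^{(n)}$ is a homogeneous Poisson point process of intensity $1$ on $\mathbb{T}_n$, each point independently marked with a mark in $[0,\infty)$ distributed as $R$ (points written $(\xi,r)$). $G(X^{(n)})$ has vertex set $X^{(n)}$ and a directed edge from $(\xi,r)$ to $(\eta,t)$ whenever $\eta\in B^{\mathbb{T}_n}_r(\xi)$. $G^\prime(X^{(n)})$ has vertex set $X^{(n)}$ and a directed edge from $(\xi,r)$ to $(\eta,t)$ iff $(\eta,t)\in B^{\mathbb{T}_n}_r(\xi)\times[0,r)$ and there is no $(\zeta,w)\in X^{(n)}\cap(B^{\mathbb{T}_n}_r(\xi)\times(t,r))$ with $\eta\in B^{\mathbb{T}_n}_w(\zeta)$. Connected components are taken ignoring edge directions. *)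

From HB Require Import structures.
From mathcomp Require Import all_boot all_order all_algebra.
From mathcomp Require Import all_classical all_reals all_analysis.
Import Order.TTheory GRing.Theory Num.Theory.
Import numFieldNormedType.Exports.

Set Implicit Arguments.
Unset Strict Implicit.
Unset Printing Implicit Defensive.

Local Open Scope classical_set_scope.
Local Open Scope ring_scope.

Section torus_graphs.
Context {R : realType} {d : nat}.

(* Toroidal distance on T_n (the cube [-n/2,n/2]^d with opposite faces
   identified): d_{T_n}(x,y) = inf_{k in Z^d} |x - y + n k|  (Euclidean norm). *)
Definition tdist (n : nat) (x y : 'I_d -> R) : R :=
  inf [set r : R | exists k : 'I_d -> int,
        r = Num.sqrt (\sum_(j < d) (x j - y j + (k j)%:~R * n%:R) ^+ 2)].

Definition in_tball (n : nat) (xi : 'I_d -> R) (r : R) (eta : 'I_d -> R) : bool :=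
  tdist n xi eta <= r.

Definition edgeG (n N : nat) (x : nat -> 'I_d -> R) (m : nat -> R) : rel 'I_N :=
  fun i j => in_tball n (x i) (m i) (x j).

Definition edgeG' (n N : nat) (x : nat -> 'I_d -> R) (m : nat -> R) : rel 'I_N :=
  fun i j =>
    [&& in_tball n (x i) (m i) (x j), 0 <= m j, m j < m i &
        ~~ [exists k : 'I_N,
              [&& in_tball n (x i) (m i) (x k), m j < m k, m k < m i &
                  in_tball n (x k) (m k) (x j)]]].

Definition undirected (T : Type) (e : rel T) : rel T := fun i j => e i j || e j i.

Definition same_components (N : nat) (e e' : rel 'I_N) : Prop :=
  forall i j : 'I_N, connect (undirected e) i j = connect (undirected e') i j.

End torus_graphs.

Arguments tdist {R d} n x y.
Arguments in_tball {R d} n xi r eta.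
Arguments edgeG {R d} n N x m.
Arguments edgeG' {R d} n N x m.
Arguments same_components N e e'.


Section marked_ppp.
Context {R : realType} {dT : measure_display} {T : measurableType dT}.
Variable P : probability T R.

Definition mutually_independent (I : eqType) (X : I -> T -> R) : Prop :=
  (forall i, measurable_fun setT (X i)) /\
  forall (J : seq I) (B : I -> set R), uniq J -> (forall i, measurable (B i)) ->
    P [set w | forall i, i \in J -> B i (X i w)] =
    \big[*%E/1%E]_(i <- J) P (X i @^-1` B i).

(* Index set of the random ingredients of the marked process:
   None             : the number of points N,
   Some (k, Some j) : the j-th coordinate of the k-th point,
   Some (k, None)   : the mark of the k-th point. *)
Definition ppp_index (d : nat) := option (nat * option 'I_d).

(* X^{(n)} is a homogeneous Poisson point process of intensity 1 on T_n
   (represented on the fundamental cube [-n/2,n/2]^d), each point independently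
   marked with law mu.  Standard construction: the number of points N is
   Poisson(n^d) = Poisson(|T_n|), and given N the points are i.i.d. uniform on
   the cube with i.i.d. marks of law mu, everything independent.  The k-th
   point is (x k w, m k w) for k < N w. *)
Definition marked_ppp_torus (d n : nat) (mu : probability R R)
    (N : T -> nat) (x : nat -> 'I_d -> T -> R) (m : nat -> T -> R) : Prop :=
  let X : ppp_index d -> T -> R := fun a =>
    match a with
    | None => fun w => (N w)%:R
    | Some (k, Some j) => x k j
    | Some (k, None) => m k
    end in
  [/\ mutually_independent X,
      (forall k : nat, P (N @^-1` [set k]) = (poisson_pmf (n%:R ^+ d) k)%:E),
      (forall k j (B : set R), measurable B ->
         P (x k j @^-1` B) =
         (lebesgue_measure (B `&` `[(- (n%:R / 2))%R, (n%:R / 2)%R]) * (n%:R^-1)%:E)%E) &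
      (forall k (B : set R), measurable B -> P (m k @^-1` B) = mu B)].

End marked_ppp.

Arguments marked_ppp_torus {R dT T} P d n mu N x m.

From HB Require Import structures.
From mathcomp Require Import all_boot all_order all_algebra.
From mathcomp Require Import all_classical all_reals all_analysis.
From mathcomp Require Import ring.
Import Order.TTheory GRing.Theory Num.Theory.
Import numFieldNormedType.Exports.
Local Open Scope classical_set_scope.
Local Open Scope ring_scope.

(* Almost surely the marks are nonnegative and pairwise distinct: two
   independent marks with an absolutely continuous law coincide with
   probability 0, as one sees by covering the diagonal with the squares of a
   fine grid.  On such a configuration, an edge i -> j of G with m_j < m_i is
   either an edge of G' or is bypassed by some k with m_j < m_k < m_i,
   x_k in B_{m_i}(x_i) and x_j in B_{m_k}(x_k); induction on the number of
   marks between m_j and m_i connects i to j in G'.  As G' is a subgraph of G,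
   the components coincide. *)

Lemma tdistC (R : realType) (d n : nat) (x y : 'I_d -> R) :
  tdist n x y = tdist n y x.
Proof.
rewrite /tdist; congr inf; apply/seteqP; split => r [k ->];
  exists (fun j => - k j); congr Num.sqrt; apply: eq_bigr => j _;
  by rewrite mulrNz mulNr -sqrrN; congr (_ ^+ 2); ring.
Qed.

Lemma undirected_sym (T : Type) (e : rel T) : symmetric (undirected e).
Proof. by move=> i j; rewrite /undirected orbC. Qed.

Section edgeG_edgeG'.
Variables (R : realType) (d n N : nat) (x : nat -> 'I_d -> R) (m : nat -> R).
Hypothesis m_ge0 : forall i : 'I_N, 0 <= m i.

Local Notation G := (edgeG n N x m).
Local Notation G' := (edgeG' n N x m).

Lemma edgeG'_sub : subrel G' G.
Proof. by move=> i j /and4P[]. Qed.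

Definition marks_between (i j : 'I_N) : pred 'I_N := [pred l : 'I_N | m j <= m l <= m i].

Lemma card_marks_between_lt {i j k : 'I_N} : m j < m k -> m k < m i ->
  (#|marks_between k j| < #|marks_between i j|)%N /\
  (#|marks_between i k| < #|marks_between i j|)%N.
Proof.
move=> jk ki; have ji := lt_trans jk ki; split; apply/proper_card/properP; split.
- apply/fintype.subsetP => l; rewrite !inE => /andP[-> lk].
  exact: le_trans lk (ltW ki).
- by exists i; rewrite !inE ?lexx ?(ltW ji) // leNgt ki andbF.
- apply/fintype.subsetP => l; rewrite !inE => /andP[kl ->].
  by rewrite (le_trans (ltW jk) kl).
- by exists j; rewrite !inE ?lexx ?(ltW ji) // leNgt jk.
Qed.

Lemma connect_edgeG' (i j : 'I_N) :
  G i j -> m j < m i -> connect (undirected G') i j.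
Proof.
move: {2}#|_| (leqnn #|marks_between i j|) => c.
elim: c i j => [|c IH] i j.
  rewrite leqn0 => /eqP/card0_eq/(_ i) + _ ji.
  by rewrite !inE lexx (ltW ji).
move=> hc Gij ji; have [G'ij|] := boolP (G' i j).
  by apply: connect1; rewrite /undirected G'ij.
have Bij : in_tball n (x i) (m i) (x j) := Gij.
rewrite /edgeG' Bij m_ge0 ji negbK => /existsP[k /and4P[Gik jk ki Gkj]].
have [cjk cki] := card_marks_between_lt jk ki.
apply: (connect_trans (y := k)).
  by apply: IH => //; rewrite -ltnS (leq_trans cki hc).
by apply: IH => //; rewrite -ltnS (leq_trans cjk hc).
Qed.

Hypothesis m_inj : injective (fun i : 'I_N => m i).

Lemma connect_undirected_edgeG' (i j : 'I_N) :
  G i j -> connect (undirected G') i j.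
Proof.
move=> Gij; have [<-|ij] := eqVneq i j; first exact: connect0.
have /lt_total/orP[mij|mji] : m i != m j by apply: contra_neq ij => /m_inj.
  rewrite (sym_connect_sym (@undirected_sym _ _)); apply: connect_edgeG' => //.
  by rewrite /edgeG /in_tball tdistC (le_trans Gij (ltW mij)).
exact: connect_edgeG'.
Qed.

Lemma same_components_edgeG_edgeG' : same_components G G'.
Proof.
move=> i j; apply/idP/idP; apply: connect_sub => {}i {}j /orP[] e.
- exact: connect_undirected_edgeG'.
- by rewrite (sym_connect_sym (@undirected_sym _ _)); exact: connect_undirected_edgeG'.
- by apply: connect1; rewrite /undirected (edgeG'_sub _ _ e).
- by apply: connect1; rewrite /undirected (edgeG'_sub _ _ e) orbT.
Qed.

End edgeG_edgeG'.

Section absolute_continuity.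
Context {R : realType} (mu : probability R R).

(* The law [mu] lives on the default measurable structure of [R], Lebesgue
   measure on [measurableTypeR R]; both have the same measurable sets. *)
Definition law_charge : set (measurableTypeR R) -> \bar R := mu.

Let law_charge0 : law_charge set0 = 0%E.
Proof. exact: measure0. Qed.

Let law_charge_finite A : measurable A -> law_charge A \is a fin_num.
Proof. exact: (fin_num_measure mu). Qed.

Let law_charge_sigma_additive : semi_sigma_additive law_charge.
Proof. exact: (@measure_semi_sigma_additive _ _ _ mu). Qed.

HB.instance Definition _ := isCharge.Build _ _ R law_charge
  law_charge0 law_charge_finite law_charge_sigma_additive.

Lemma abs_continuous_small : mu `<< (@lebesgue_measure R) ->
  forall e : R, 0 < e -> exists2 dl : R, 0 < dl &
    forall A, measurable A -> (lebesgue_measure A < dl%:E)%E -> (mu A < e%:E)%E.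
Proof.
move=> mu_ac e e0; have [P [N muPN]] := Hahn_decomposition law_charge.
have [dl [dl0 small]] := charge_variation_continuous muPN mu_ac e0.
exists dl => // A mA LA; apply: le_lt_trans (small A mA LA).
apply: le_trans (abse_charge_variation muPN mA).
by rewrite gee0_abs //; exact: measure_ge0.
Qed.

End absolute_continuity.

Section grid.
Context {R : realType}.

Definition grid_itv (h : R) (z : nat) : set R := `[z%:R * h, z.+1%:R * h[%classic.

Lemma grid_itv_trunc (h a : R) : 0 < h -> 0 <= a -> grid_itv h (Num.truncn (a / h)) a.
Proof.
move=> h0 a0; have /andP[lo hi] := truncn_itv (divr_ge0 a0 (ltW h0)).
by rewrite /grid_itv /= in_itv /= -ler_pdivlMr // lo -ltr_pdivrMr.
Qed.

Lemma grid_itv_trivIset (h : R) : 0 < h -> trivIset setT (grid_itv h).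
Proof.
move=> h0 i j _ _ [a []]; rewrite /grid_itv /= !in_itv /= => /andP[ia ai] /andP[ja aj].
have : i%:R * h < j.+1%:R * h by exact: le_lt_trans ia aj.
have : j%:R * h < i.+1%:R * h by exact: le_lt_trans ja ai.
rewrite !ltr_pM2r // !ltr_nat !ltnS => ji ij.
by apply/eqP; rewrite eqn_leq ij ji.
Qed.

Lemma lebesgue_measure_grid_itv (h : R) (z : nat) : 0 < h ->
  lebesgue_measure (grid_itv h z) = h%:E.
Proof.
move=> h0; rewrite /grid_itv lebesgue_measure_itv /= lte_fin ltr_pM2r // ltr_nat ltnSn.
by rewrite -EFinD -mulrBl -natrB // subSnn mul1r.
Qed.

Lemma nneseries_grid_itv_le1 (mu : probability R R) (h : R) : 0 < h ->
  (\sum_(0 <= z <oo) mu (grid_itv h z) <= 1)%E.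
Proof.
move=> h0; have mU : measurable (\bigcup_z grid_itv h z).
  by apply: bigcup_measurable => z _; exact: measurable_itv.
rewrite (eq_eseriesl _ _ (fun z => esym (in_setT z))) -measure_bigcup.
- exact: probability_le1.
- by move=> z _; exact: measurable_itv.
- exact: grid_itv_trivIset.
Qed.

End grid.

Section independent_diagonal.
Variables (R : realType) (dT : measure_display) (T : measurableType dT).
Variables (P : probability T R) (mu : probability R R) (X Y : T -> R).
Hypotheses (mX : measurable_fun setT X) (mY : measurable_fun setT Y).

Lemma measurable_eq_ge0 : measurable [set w | X w = Y w /\ 0 <= X w].
Proof.
have -> : [set w | X w = Y w /\ 0 <= X w] =
    ((X \- Y) @^-1` [set 0]) `&` (X @^-1` `[0, +oo[).
  apply/seteqP; split => w /=.
    by move=> [-> Y0]; rewrite subrr in_itv /= andbT.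
  by move=> [/eqP]; rewrite subr_eq0 in_itv /= andbT => /eqP -> ->.
apply: measurableI; rewrite -[_ @^-1` _]setTI.
  exact: measurable_realfun.measurable_funB.
exact: mX.
Qed.

(* On a grid of mesh h so small that every cell J has mu(J) < e, the square
   J x J has probability mu(J)^2 <= e mu(J). *)
Lemma independent_eq_ge0_null :
  (forall B, measurable B -> P (X @^-1` B `&` Y @^-1` B) = (mu B * mu B)%E) ->
  mu `<< (@lebesgue_measure R) ->
  P [set w | X w = Y w /\ 0 <= X w] = 0%E.
Proof.
move=> XY_indep mu_ac; apply/eqP; rewrite eq_le measure_ge0 andbT.
apply/lee_addgt0Pr => e e0; rewrite add0e.
have [dl dl0 mu_small] := abs_continuous_small _ mu_ac _ e0.
pose h := dl / 2; have h0 : 0 < h by rewrite divr_gt0.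
have mJ z : measurable (grid_itv h z) by exact: measurable_itv.
have muJ z : (mu (grid_itv h z) < e%:E)%E.
  apply: mu_small; first exact: measurable_itv.
  rewrite lebesgue_measure_grid_itv // lte_fin.
  by rewrite /h ltr_pdivrMr // ltr_pMr // ltr1n.
have mE z : measurable (X @^-1` grid_itv h z `&` Y @^-1` grid_itv h z).
  by apply: measurableI; rewrite -[_ @^-1` _]setTI; [exact: mX | exact: mY].
have cover : [set w | X w = Y w /\ 0 <= X w] `<=`
    \bigcup_z (X @^-1` grid_itv h z `&` Y @^-1` grid_itv h z).
  by move=> w [XYw Xw0]; exists (Num.truncn (X w / h)) => //; rewrite /= -XYw;
     split; exact: grid_itv_trunc.
apply: le_trans (measure_sigma_subadditive P mE measurable_eq_ge0 cover) _.
apply: (@le_trans _ _ (\sum_(0 <= z <oo) (e%:E * mu (grid_itv h z)))%E).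
  apply: lee_nneseries => [z _ _|z _]; first exact: measure_ge0.
  apply: (@le_trans _ _ (mu (grid_itv h z) * mu (grid_itv h z))%E).
    by rewrite le_eqVlt; apply/orP; left; apply/eqP; exact: XY_indep.
  by apply: lee_wpmul2r; [exact: measure_ge0 | exact: ltW].
rewrite nneseriesZl; last by move=> z _; exact: measure_ge0.
rewrite -[leRHS]mule1 lee_wpmul2l ?lee_fin ?(ltW e0) //.
exact: nneseries_grid_itv_le1.
Qed.

End independent_diagonal.

Section marked_process.
Context {R : realType} {dT : measure_display} {T : measurableType dT}.
Context {P : probability T R} {d n : nat} {mu : probability R R}.
Context {N : T -> nat} {x : nat -> 'I_d -> T -> R} {m : nat -> T -> R}.
Hypothesis ppp : marked_ppp_torus P d n mu N x m.

Lemma marked_ppp_measurable_mark k : measurable_fun setT (m k).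
Proof. by case: ppp => -[mX _] _ _ _; exact: (mX (Some (k, None))). Qed.

Lemma marked_ppp_marks_indep k l (B : set R) : k != l -> measurable B ->
  P (m k @^-1` B `&` m l @^-1` B) = (mu B * mu B)%E.
Proof.
case: ppp => -[_ indep] _ _ law kl mB.
have kl_uniq : uniq [:: Some (k, None); Some (l, None) : ppp_index d].
  by rewrite /= inE andbT; apply: contra_neq kl => -[].
have := indep _ (fun=> B) kl_uniq (fun=> mB).
rewrite !big_cons big_nil mule1 /= -{1}(law k B mB) -(law l B mB) => <-.
congr (P _).
apply/seteqP; split => w /=.
  by move=> [Bk Bl] i; rewrite !inE => /orP[]/eqP ->.
by move=> Bw; split; [apply: (Bw (Some (k, None))) | apply: (Bw (Some (l, None)))];
  rewrite !inE eqxx ?orbT.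
Qed.

Lemma ae_marked_ppp_mark_ge0 : mu `]-oo, 0[%classic = 0%E ->
  \forall w \ae P, forall k, 0 <= m k w.
Proof.
case: ppp => _ _ _ law mu_neg; apply: ae_foralln => k.
exists (m k @^-1` `]-oo, 0[); split.
- by rewrite -[_ @^-1` _]setTI; exact: marked_ppp_measurable_mark.
- exact: etrans (law k _ (measurable_itv _)) mu_neg.
- by move=> w /negP; rewrite -ltNge /= in_itv.
Qed.

Lemma ae_marked_ppp_marks_neq :
  mu `]-oo, 0[%classic = 0%E -> mu `<< (@lebesgue_measure R) ->
  \forall w \ae P, forall k l, k <> l -> m k w <> m l w.
Proof.
move=> mu_neg mu_ac.
have neq_of_ge0 : \forall w \ae P, forall k l, k <> l -> 0 <= m k w -> m k w <> m l w.
  apply: ae_foralln => k; apply: ae_foralln => l.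
  have [<-|kl] := eqVneq k l; first by apply: aeW => w /(_ erefl).
  exists [set w | m k w = m l w /\ 0 <= m k w]; split.
  - exact/measurable_eq_ge0/marked_ppp_measurable_mark/marked_ppp_measurable_mark.
  - apply: independent_eq_ge0_null mu_ac => [||B mB].
    + exact: marked_ppp_measurable_mark.
    + exact: marked_ppp_measurable_mark.
    + exact: marked_ppp_marks_indep.
  - move=> w /= not_neq; apply: contrapT => not_diag; apply: not_neq => _ ge0 eqkl.
    exact: not_diag.
apply: filter_app2 (ae_marked_ppp_mark_ge0 mu_neg) neq_of_ge0.
by apply: aeW => w ge0 neq k l kl; exact: neq _ _ kl (ge0 k).
Qed.

End marked_process.

Theorem proposition5p1 (R : realType) (d n : nat) (mu : probability R R)
    (beta s : R) (dT : measure_display) (T : measurableType dT)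
    (P : probability T R) (N : T -> nat) (x : nat -> 'I_d -> T -> R)
    (m : nat -> T -> R) :
  (2 <= d)%N -> (1 <= n)%N ->
  (* R >= 0 *)
  mu `]-oo, 0[%classic = 0%E ->
  (* R has an absolutely continuous distribution *)
  mu `<< (@lebesgue_measure R) ->
  (* lim_{h -> oo} h^s P(R > h) = beta, with beta, s in (0, oo) *)
  0 < beta -> 0 < s ->
  h `^ s * fine (mu `]h, +oo[%classic) @[h --> +oo] --> beta ->
  marked_ppp_torus P d n mu N x m ->
  \forall w \ae P,
    same_components (edgeG n (N w) (fun k j => x k j w) (fun k => m k w))
                    (edgeG' n (N w) (fun k j => x k j w) (fun k => m k w)).
Proof.
move=> _ _ mu_neg mu_ac _ _ _ ppp.
have := ae_marked_ppp_marks_neq ppp mu_neg mu_ac.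
have := ae_marked_ppp_mark_ge0 ppp mu_neg.
apply: filter_app2; apply: aeW => w m_ge0 m_neq.
apply: same_components_edgeG_edgeG' => [i|i j mij]; first exact: m_ge0.
by apply: val_inj; apply: contrapT => /m_neq.
Qed.
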